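(* Consider the following networked control setting. Let $f_p:\mathbb{R}^{n_p}\times\mathbb{R}^{m_p}\to\mathbb{R}^{n_p}$ with $f_p(0,0)=0$, closed sets $\mathbb{X}_p\subseteq\mathbb{R}^{n_p}$, $\mathbb{U}_p\subseteq\mathbb{R}^{m_p}$ containing the origin, matrices $Q,R>0$, and integers $g\in\mathbb{I}_{\geq 1}$, $c\in\mathbb{I}_{\geq g}$, $b\in\mathbb{I}_{\geq c}$, $q:=\lceil c/g\rceil$. The overall state is $x=(x_p,u_s,\beta)\in\mathbb{X}:=\mathbb{X}_p\times\mathbb{U}_p\times\mathbb{I}_{[0,b]}$, the input $u=(u_c,\gamma)\in\mathbb{U}:=\mathbb{U}_p\times\{0,1\}$, and the dynamics are $x(k+1)=f(x(k),u(k))$ with $$f(x,u)=\big(f_p(x_p,\gamma u_c+(1-\gamma)u_s),\ \gamma u_c+(1-\gamma)u_s,\ \min\{\beta+g-\gamma c,b\}\big),$$ stage cost $\ell(x,u)=\|x_p\|_Q^2+\gamma\|u_c\|_R^2+(1-\gamma)\|u_s\|_R^2$. For $u_c\in\mathbb{U}_p$ define $f_{p,0}(x_p,u_c):=x_p$, $f_{p,i}(x_p,u_c):=f_p(f_{p,i-1}(x_p,u_c),u_c)$. Assume: (A1) there exist a closed set $\mathbb{X}_{f,p}\subseteq\mathbb{X}_p$ containing the origin and $k_p:\mathbb{X}_{f,p}\to\mathbb{U}_p$ such that for all $x_p\in\mathbb{X}_{f,p}$: $f_{p,i}(x_p,k_p(x_p))\in\mathbb{X}_p$ for all $i\in\mathbb{I}_{[1,q-1]}$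 and $f_{p,q}(x_p,k_p(x_p))\in\mathbb{X}_{f,p}$; (A2) there is a continuous positive definite $V_{f,p}:\mathbb{X}_{f,p}\to\mathbb{R}$ with, for all $x_p\in\mathbb{X}_{f,p}$, $V_{f,p}(f_{p,q}(x_p,k_p(x_p)))-V_{f,p}(x_p)\leq -q\|k_p(x_p)\|_R^2-\sum_{i=0}^{q-1}\|f_{p,i}(x_p,k_p(x_p))\|_Q^2$; (A3) $c/g\notin\mathbb{I}$. Let $\sigma>0$, $V_f(x):=V_{f,p}(x_p)+\sigma(b^2-\beta^2)$, and $\mathbb{X}_f:=\big(\{0\}\times\{0\}\times\mathbb{I}_{[0,c-g-1]}\big)\cup\big(\mathbb{X}_{f,p}\times\mathbb{U}_p\times\mathbb{I}_{[c-g,b]}\big)$. Fix $r\in\mathbb{I}_{\geq1}$, $M:=rq$, and $N\in\mathbb{I}_{\geq M}$. The closed loop is generated by the rollout scheme: at each $k=jM$, $j\in\mathbb{I}_{\geq0}$, solve the problem $\mathbb{P}(x(jM))$: minimize $\sum_{i=0}^{N-1}\ell(x(i|jM),u(i|jM))+V_f(x(N|jM))$ over $u(0|jM),\dots,u(N-1|jM)$ subject to $x(i+1|jM)=f(x(i|jM),u(i|jM))$, $x(i|jM)\in\mathbb{X}$, $u(i|jM)\in\mathbb{U}$ for $i\in\mathbb{I}_{[0,N-1]}$, $x(0|jM)=x(jM)$, $x(N|jM)\in\mathbb{X}_f$, with optimizer $u^*(\cdot|jM)$, and apply $u(jM+i)=u^*(i|jM)$ for $i\in\mathbb{I}_{[0,M-1]}$.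 Then, if $\mathbb{P}(x(0))$ is feasible, $\mathbb{P}(x(jM))$ is feasible for all $j\in\mathbb{I}_{\geq0}$, and $x_p(k)\to0$ and $u_s(k)\to0$ as $k\to\infty$. Additionally, $\beta(k)$ converges to the set $[\max\{0,b-Ng\},b]$ as $k\to\infty$, and the subsequence $\beta(jM)$ converges to $[\max\{0,b-(N-M)g\},b]$ as $j\to\infty$.
   Context: $\mathbb{I}$ denotes the integers, $\mathbb{I}_{[a,b]}:=\mathbb{I}\cap[a,b]$, $\mathbb{I}_{\geq a}:=\mathbb{I}\cap[a,\infty)$, $\|v\|_A^2:=v^TAv$, and $A>0$ means positive definite. Here $x_p$ is the plant state, $u_s(k)=u_p(k-1)$ is the last applied input held by a zero-order-hold actuator, $\beta$ is the token level of a token bucket (size $b$, token rate $g$, transmission cost $c$), $u_c$ the computed control value and $\gamma\in\{0,1\}$ the transmission decision. ''Feasible'' means the constraint set of the optimization problem is nonempty. *)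

From HB Require Import structures.
From mathcomp Require Import all_boot all_order all_algebra.
From mathcomp Require Import all_classical all_reals all_analysis.
Set Implicit Arguments. Unset Strict Implicit. Unset Printing Implicit Defensive.
Import Order.TTheory GRing.Theory Num.Theory.
Import numFieldNormedType.Exports.
Local Open Scope classical_set_scope.
Local Open Scope ring_scope.

Section Defs.
Variable R : realType.

Definition qf n (A : 'M[R]_n) (v : 'cV[R]_n) : R := (v^T *m A *m v) 0 0.

Definition posdefmx n (A : 'M[R]_n) : Prop :=
  A^T = A /\ forall v : 'cV[R]_n, v != 0 -> 0 < qf A v.

Definition ceil_div (c g : nat) : nat := ((c + g.-1) %/ g)%N.

Fixpoint fiter np mp (fp : 'cV[R]_np -> 'cV[R]_mp -> 'cV[R]_np)
  (i : nat) (xp : 'cV[R]_np) (uc : 'cV[R]_mp) : 'cV[R]_np :=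
  match i with
  | 0 => xp
  | i'.+1 => fp (fiter fp i' xp uc) uc
  end.

(* overall state x = (x_p, u_s, beta) and input u = (u_c, gamma) *)
Definition state np mp := ('cV[R]_np * 'cV[R]_mp * int)%type.
Definition input mp := ('cV[R]_mp * bool)%type.

Definition xp_of np mp (x : state np mp) := x.1.1.
Definition us_of np mp (x : state np mp) := x.1.2.
Definition beta_of np mp (x : state np mp) := x.2.

Definition applied mp (uc us : 'cV[R]_mp) (gam : bool) : 'cV[R]_mp :=
  (gam%:R : R) *: uc + (1 - (gam%:R : R)) *: us.

Definition fsys np mp (fp : 'cV[R]_np -> 'cV[R]_mp -> 'cV[R]_np)
  (g c b : nat) (x : state np mp) (u : input mp) : state np mp :=
  let ua := applied u.1 (us_of x) u.2 in
  (fp (xp_of x) ua, ua,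
   Order.min (beta_of x + g%:Z - (u.2 : nat)%:Z * c%:Z) b%:Z).

Definition ell np mp (Q : 'M[R]_np) (Rm : 'M[R]_mp)
  (x : state np mp) (u : input mp) : R :=
  qf Q (xp_of x) + (u.2%:R : R) * qf Rm u.1
  + (1 - (u.2%:R : R)) * qf Rm (us_of x).

Definition inX np mp (Xp : set 'cV[R]_np) (Up : set 'cV[R]_mp) (b : nat)
  (x : state np mp) : Prop :=
  Xp (xp_of x) /\ Up (us_of x) /\ (0 <= beta_of x)%R /\ (beta_of x <= b%:Z)%R.

Definition inU mp (Up : set 'cV[R]_mp) (u : input mp) : Prop := Up u.1.

Definition inXf np mp (Xfp : set 'cV[R]_np) (Up : set 'cV[R]_mp)
  (g c b : nat) (x : state np mp) : Prop :=
  (xp_of x = 0 /\ us_of x = 0 /\ (0 <= beta_of x)%R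
      /\ (beta_of x <= c%:Z - g%:Z - 1)%R)
  \/ (Xfp (xp_of x) /\ Up (us_of x) /\ (c%:Z - g%:Z <= beta_of x)%R
      /\ (beta_of x <= b%:Z)%R).

Definition Vf np mp (Vfp : 'cV[R]_np -> R) (sigma : R) (b : nat)
  (x : state np mp) : R :=
  Vfp (xp_of x) + sigma * ((b%:R : R) ^+ 2 - ((beta_of x)%:~R : R) ^+ 2).

Fixpoint pred_traj np mp (fp : 'cV[R]_np -> 'cV[R]_mp -> 'cV[R]_np)
  (g c b : nat) (x0 : state np mp) (useq : nat -> input mp) (i : nat)
  : state np mp :=
  match i with
  | 0 => x0
  | i'.+1 => fsys fp g c b (pred_traj fp g c b x0 useq i') (useq i')
  end.

Definition P_admissible np mp (fp : 'cV[R]_np -> 'cV[R]_mp -> 'cV[R]_np)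
  (Xp : set 'cV[R]_np) (Up : set 'cV[R]_mp) (Xfp : set 'cV[R]_np)
  (g c b N : nat) (x0 : state np mp) (useq : nat -> input mp) : Prop :=
  (forall i, (i < N)%N ->
     inX Xp Up b (pred_traj fp g c b x0 useq i) /\ inU Up (useq i))
  /\ inXf Xfp Up g c b (pred_traj fp g c b x0 useq N).

Definition P_feasible np mp (fp : 'cV[R]_np -> 'cV[R]_mp -> 'cV[R]_np)
  (Xp : set 'cV[R]_np) (Up : set 'cV[R]_mp) (Xfp : set 'cV[R]_np)
  (g c b N : nat) (x0 : state np mp) : Prop :=
  exists useq, P_admissible fp Xp Up Xfp g c b N x0 useq.

Definition P_cost np mp (fp : 'cV[R]_np -> 'cV[R]_mp -> 'cV[R]_np)
  (Q : 'M[R]_np) (Rm : 'M[R]_mp) (Vfp : 'cV[R]_np -> R) (sigma : R)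
  (g c b N : nat) (x0 : state np mp) (useq : nat -> input mp) : R :=
  \sum_(i < N) ell Q Rm (pred_traj fp g c b x0 useq i) (useq i)
  + Vf Vfp sigma b (pred_traj fp g c b x0 useq N).

Definition P_optimal np mp (fp : 'cV[R]_np -> 'cV[R]_mp -> 'cV[R]_np)
  (Xp : set 'cV[R]_np) (Up : set 'cV[R]_mp) (Xfp : set 'cV[R]_np)
  (Q : 'M[R]_np) (Rm : 'M[R]_mp) (Vfp : 'cV[R]_np -> R) (sigma : R)
  (g c b N : nat) (x0 : state np mp) (useq : nat -> input mp) : Prop :=
  P_admissible fp Xp Up Xfp g c b N x0 useq /\
  forall v, P_admissible fp Xp Up Xfp g c b N x0 v ->
    P_cost fp Q Rm Vfp sigma g c b N x0 useq
      <= P_cost fp Q Rm Vfp sigma g c b N x0 v.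

Definition dist_interval (lo hi y : R) : R :=
  Num.max 0 (Num.max (lo - y) (y - hi)).

End Defs.

(* The proof follows the usual terminal-ingredient argument of model predictive
   control, with the token level as an extra Lyapunov coordinate.  From every
   state of X_f there is a q-step continuation that stays admissible and returns
   to X_f: if x_p = u_s = 0 the actuator idles and collects tokens, otherwise k_p
   is transmitted once and then held.  Since c < q g (this is (A3)), the bucket
   gains at least one token over the q steps unless it is full, so along the
   continuation V_f decreases by the accumulated stage cost plus sigma [beta < b].
   Appending r such blocks to the tail of the previous optimal input gives a
   feasible candidate for P(x((j+1)M)), hence the optimal cost decreases along
   the sampled closed loop by the applied stage costs plus sigma [beta(N|jM) < b].
   Both are summable, so the stage cost tends to 0, which forces x_p -> 0 and
   u_s -> 0 by positive definiteness of Q and R, and the predicted terminal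
   bucket is eventually full, which bounds beta from below because it grows by at
   most g per step. *)

From HB Require Import structures.
From mathcomp Require Import all_boot all_order all_algebra.
From mathcomp Require Import all_classical all_reals all_analysis.
From mathcomp Require Import ring lra zify.
Set Implicit Arguments. Unset Strict Implicit. Unset Printing Implicit Defensive.
Import Order.TTheory GRing.Theory Num.Theory.
Import numFieldNormedType.Exports.
Local Open Scope classical_set_scope.
Local Open Scope ring_scope.

(** * Positive definite quadratic forms *)

Section QuadraticForm.
Variables (R : realType) (n : nat) (A : 'M[R]_n).

Definition bform (v w : 'cV[R]_n) : R := (v^T *m A *m w) 0 0.

Lemma qf0 : qf A 0 = 0.
Proof. by rewrite /qf trmx0 !mul0mx mxE. Qed.

Hypothesis posA : posdefmx A.

Lemma qf_ge0 v : 0 <= qf A v.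
Proof. by have [->|/posA.2/ltW] := eqVneq v 0; rewrite ?qf0. Qed.

Lemma bformC v w : bform v w = bform w v.
Proof.
have tr (B : 'M[R]_1) : B 0 0 = B^T 0 0 by rewrite mxE.
by rewrite /bform tr !trmx_mul trmxK posA.1 mulmxA.
Qed.

Lemma qfDZ v w (t : R) :
  qf A (v + t *: w) = qf A v + 2 * t * bform v w + t ^+ 2 * qf A w.
Proof.
rewrite /qf.
have -> : (v + t *: w)^T = v^T + t *: w^T by rewrite linearD linearZ.
rewrite !mulmxDl !mulmxDr -!scalemxAl -!scalemxAr.
have entryD (B C : 'M[R]_1) : (B + C) 0 0 = B 0 0 + C 0 0 by rewrite mxE.
have entryZ (B : 'M[R]_1) : (t *: B) 0 0 = t * B 0 0 by rewrite mxE.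
rewrite !entryD !entryZ -/(bform v w) -/(bform w v) (bformC w v).
rewrite -/(qf A v) -/(qf A w); ring.
Qed.

Lemma bform_sqr_le v w : bform v w ^+ 2 <= qf A v * qf A w.
Proof.
have [->|w_neq0] := eqVneq w 0.
  by rewrite qf0 mulr0 /bform mulmx0 mxE expr0n.
have qw_gt0 : 0 < qf A w by apply: posA.2.
pose t := - bform v w / qf A w.
have := qf_ge0 (v + t *: w); rewrite qfDZ.
have -> : qf A v + 2 * t * bform v w + t ^+ 2 * qf A w =
          (qf A v * qf A w - bform v w ^+ 2) / qf A w.
  by rewrite /t; field; rewrite gt_eqF.
by rewrite pmulr_lge0 ?invr_gt0 // subr_ge0.
Qed.

Lemma posdef_unitmx : A \in unitmx.
Proof.
rewrite unitmxE unitfE; apply/negP => /det0P [v v_neq0 vA].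
have := posA.2 v^T; rewrite trmx_eq0 => /(_ v_neq0).
by rewrite /qf trmxK vA mul0mx mxE ltxx.
Qed.

Lemma bform_invmx_delta i (v : 'cV[R]_n) : bform (invmx A *m delta_mx i 0) v = v i 0.
Proof.
rewrite /bform trmx_mul trmx_inv posA.1 trmx_delta -!mulmxA.
by rewrite (mulmxA (invmx A)) mulVmx ?posdef_unitmx // mul1mx -rowE mxE.
Qed.

Lemma entry_sqr_le_qf i (v : 'cV[R]_n) :
  v i 0 ^+ 2 <= qf A (invmx A *m delta_mx i 0) * qf A v.
Proof. by rewrite -bform_invmx_delta; apply: bform_sqr_le. Qed.

Lemma qf_lt_norm_lt (eps : R) : 0 < eps ->
  exists2 del : R, 0 < del & forall v, qf A v < del -> `|v| < eps.
Proof.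
move=> eps_gt0.
pose C := \sum_i qf A (invmx A *m delta_mx i 0) + 1.
have qfC i : qf A (invmx A *m delta_mx i 0) <= C.
  rewrite /C (bigD1 i) //= -addrA lerDl addr_ge0 // sumr_ge0 // => k _.
  exact: qf_ge0.
have C_gt0 : 0 < C.
  by rewrite /C ltr_pwDr // sumr_ge0 // => i _; apply: qf_ge0.
exists (eps ^+ 2 / C); first by rewrite divr_gt0 ?exprn_gt0.
move=> v qv_lt; rewrite [X in X < _]/Num.norm /= mx_normrE.
apply: bigmax_lt => // -[i k] _ /=; rewrite (ord1 k).
rewrite -(@ltr_pXn2r _ 2) ?nnegrE ?normr_ge0 ?ltW // real_normK ?num_real //.
apply: le_lt_trans (entry_sqr_le_qf i v) _.
apply: le_lt_trans (ler_wpM2r (qf_ge0 v) (qfC i)) _.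
by rewrite -ltr_pdivlMl // mulrC.
Qed.

Lemma qf_cvg0 (v : nat -> 'cV[R]_n) (e : nat -> R) :
  (forall k, qf A (v k) <= e k) -> e @ \oo --> 0 -> v @ \oo --> (0 : 'cV[R]_n).
Proof.
move=> qv_le /cvgr0Pnorm_lt e_cvg; apply/cvgr0Pnorm_lt => eps eps_gt0.
have [del del_gt0 qf_small] := qf_lt_norm_lt eps_gt0.
near=> k; apply: qf_small; apply: le_lt_trans (qv_le k) _.
apply: le_lt_trans (ler_norm _) _; near: k; exact: e_cvg.
Unshelve. all: by end_near. Qed.
End QuadraticForm.

(** * Nonnegative series *)

Lemma sum_nat_blocks (V : nmodType) (F : nat -> V) (M n : nat) :
  \sum_(0 <= k < n * M) F k = \sum_(0 <= j < n) \sum_(i < M) F (j * M + i)%N.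
Proof.
elim: n => [|n IH]; first by rewrite mul0n !big_nil.
rewrite mulSnr (big_cat_nat (leq0n _) (leq_addr _ _)) IH big_nat_recr //=.
congr (_ + _); rewrite -{1}[(n * M)%N]add0n big_addn addKn big_mkord.
by apply: eq_bigr => i _; rewrite addnC.
Qed.

Section NonnegativeSeries.
Variable R : realType.

Lemma bounded_series_cvg0 (a : nat -> R) (B : R) : (forall k, 0 <= a k) ->
  (forall n, \sum_(0 <= k < n) a k <= B) -> a @ \oo --> 0.
Proof.
move=> a_ge0 a_le; apply: cvg_series_cvg_0; apply: nondecreasing_is_cvgn.
  by apply: (@nondecreasing_series R a xpredT 0%N) => k _ _.
by exists B => _ [k _ <-]; apply: a_le.
Qed.

Lemma descent_series_le (J a : nat -> R) : (forall j, 0 <= J j) ->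
  (forall j, J j.+1 + a j <= J j) -> forall n, \sum_(0 <= j < n) a j <= J 0%N.
Proof.
move=> J_ge0 J_desc n.
suff : \sum_(0 <= j < n) a j <= J 0%N - J n by move/le_trans; apply; rewrite gerBl.
elim: n => [|n IH]; first by rewrite big_nil subrr.
by rewrite big_nat_recr //=; have := J_desc n; lra.
Qed.

Lemma block_series_cvg0 (e : nat -> R) (M : nat) (B : R) :
  (0 < M)%N -> (forall k, 0 <= e k) ->
  (forall n, \sum_(0 <= j < n) \sum_(i < M) e (j * M + i)%N <= B) ->
  e @ \oo --> 0.
Proof.
move=> M_gt0 e_ge0 blocks_le; apply: (bounded_series_cvg0 e_ge0) => n.
apply: (@le_trans _ _ (\sum_(0 <= k < n * M) e k)); last first.
  by rewrite sum_nat_blocks.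
rewrite (big_cat_nat (leq0n _) (leq_pmulr n M_gt0)) /= lerDl.
by apply: sumr_ge0 => k _.
Qed.

End NonnegativeSeries.

(** * Token bucket arithmetic *)

Lemma ltn_ceil_div_mul c g : (0 < g)%N -> ~~ (g %| c)%N -> (c < ceil_div c g * g)%N.
Proof.
move=> g_gt0 g_ndvd_c; rewrite /ceil_div.
have := ltn_ceil (c + g.-1) g_gt0; rewrite mulSn.
set d := ((c + g.-1) %/ g)%N => c_lt; rewrite ltn_neqAle; apply/andP; split.
  by apply: contraNneq g_ndvd_c => ->; apply: dvdn_mull.
lia.
Qed.

Lemma ratio_notint_ndvdn (R : numFieldType) (c g : nat) : (0 < g)%N ->
  ~ (exists z : int, (c%:R / g%:R : R) = z%:~R) -> ~~ (g %| c)%N.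
Proof.
move=> g_gt0 not_int; apply/negP => /divnK c_eq; apply: not_int.
exists (c %/ g)%N; rewrite -[in LHS]c_eq natrM mulfK //.
by rewrite pnatr_eq0 -lt0n.
Qed.

Lemma dist_interval_eq0 (R : realType) (lo hi y : R) :
  lo <= y -> y <= hi -> dist_interval lo hi y = 0.
Proof.
by move=> lo_le hi_ge; apply/max_idPl; rewrite ge_max !subr_le0 lo_le hi_ge.
Qed.

Lemma dist_token_interval_eq0 (R : realType) (b g n : nat) (be : int) :
  (0 <= be)%R -> (be <= b%:Z)%R -> (b%:Z - (n * g)%:Z <= be)%R ->
  dist_interval (Num.max 0 (b%:R - n%:R * g%:R)) b%:R (be%:~R : R) = 0.
Proof.
move=> be_ge0 be_le be_ge; apply: dist_interval_eq0.
  rewrite ge_max ler0z be_ge0 -natrM /=.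
  by rewrite [_ - _](_ : _ = (b%:Z - (n * g)%:Z)%:~R) ?ler_int // intrB.
by rewrite [b%:R](_ : _ = (b%:Z)%:~R) // ler_int.
Qed.

(** * Predicted trajectories of the token bucket system *)

Definition splice T (n : nat) (w w' : nat -> T) (i : nat) : T :=
  if (i < n)%N then w i else w' (i - n)%N.

Section TokenBucketSystem.
Variables (R : realType) (np mp : nat) (fp : 'cV[R]_np -> 'cV[R]_mp -> 'cV[R]_np).
Variables (g c b : nat).
Local Notation traj := (pred_traj fp g c b).
Local Notation state := (state R np mp).
Local Notation input := (input R mp).

Lemma fsys_transmit (z : state) uc :
  fsys fp g c b z (uc, true) =
  (fp (xp_of z) uc, uc, Order.min (beta_of z + g%:Z - c%:Z) b%:Z).
Proof.
by rewrite /fsys /applied /= scale1r subrr scale0r addr0 mul1r.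
Qed.

Lemma fsys_hold (z : state) uc :
  fsys fp g c b z (uc, false) =
  (fp (xp_of z) (us_of z), us_of z, Order.min (beta_of z + g%:Z) b%:Z).
Proof. by rewrite /fsys /applied /= scale0r add0r subr0 scale1r mul0r subr0. Qed.

Lemma beta_fsys_le (z : state) (v : input) :
  (beta_of (fsys fp g c b z v) <= beta_of z + g%:Z)%R.
Proof. by case: v => uc []; rewrite ?fsys_transmit ?fsys_hold /beta_of /=; lia. Qed.

Lemma beta_pred_traj_le (z : state) (w : nat -> input) i d :
  (beta_of (traj z w (i + d)) <= beta_of (traj z w i) + (d * g)%:Z)%R.
Proof.
elim: d => [|d IH]; first by rewrite addn0 mul0n addr0.
rewrite addnS /=; apply: le_trans (beta_fsys_le _ _) _; move: IH.
rewrite mulSn; lia.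
Qed.

Lemma pred_traj_ext (z : state) (w w' : nat -> input) n :
  (forall k, (k < n)%N -> w k = w' k) -> traj z w n = traj z w' n.
Proof. by elim: n => //= n IH eq_w; rewrite eq_w // IH // => k /ltnW/eq_w. Qed.

Lemma pred_trajD (z : state) (w : nat -> input) n i :
  traj z w (n + i) = traj (traj z w n) (fun k => w (n + k)%N) i.
Proof. by elim: i => [|i IH]; rewrite ?addn0 // addnS /= IH. Qed.

Lemma pred_traj_splice_le (z : state) (w w' : nat -> input) n i : (i <= n)%N ->
  traj z (splice n w w') i = traj z w i.
Proof. by move=> le_in; apply: pred_traj_ext => k lt_ki; rewrite /splice ifT //; lia. Qed.

Lemma pred_traj_spliceD (z : state) (w w' : nat -> input) n i :
  traj z (splice n w w') (n + i) = traj (traj z w n) w' i.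
Proof.
rewrite pred_trajD pred_traj_splice_le //; apply: pred_traj_ext => k _.
by rewrite /splice ifF ?addKn //; lia.
Qed.

Variables (Xp : set 'cV[R]_np) (Up : set 'cV[R]_mp) (Q : 'M[R]_np) (Rm : 'M[R]_mp).

Definition admissible_on (z : state) (w : nat -> input) (n : nat) : Prop :=
  forall i, (i < n)%N -> inX Xp Up b (traj z w i) /\ inU Up (w i).

Definition stage_cost (z : state) (w : nat -> input) (n : nat) : R :=
  \sum_(i < n) ell Q Rm (traj z w i) (w i).

Lemma admissible_on_splice (z : state) (w w' : nat -> input) n m :
  admissible_on z w n -> admissible_on (traj z w n) w' m ->
  admissible_on z (splice n w w') (n + m).
Proof.
move=> adm_w adm_w' i lt_i; case: (ltnP i n) => [lt_in|le_ni].
  by rewrite pred_traj_splice_le 1?ltnW // /splice lt_in; apply: adm_w.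
rewrite -(subnKC le_ni) pred_traj_spliceD /splice ifF ?addKn; last by lia.
by apply: adm_w'; lia.
Qed.

Lemma admissible_on_drop (z : state) (w : nat -> input) n m :
  admissible_on z w (n + m) -> admissible_on (traj z w n) (fun k => w (n + k)%N) m.
Proof. by move=> adm i lt_im; rewrite -pred_trajD; apply: adm; lia. Qed.

Lemma stage_cost_splice (z : state) (w w' : nat -> input) n m :
  stage_cost z (splice n w w') (n + m) =
  stage_cost z w n + stage_cost (traj z w n) w' m.
Proof.
rewrite /stage_cost big_split_ord /=; congr (_ + _); apply: eq_bigr => i _ /=.
  by rewrite pred_traj_splice_le 1?ltnW // /splice ltn_ord.
by rewrite pred_traj_spliceD /splice ifF ?addKn //; lia.
Qed.

Lemma stage_costD (z : state) (w : nat -> input) n m :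
  stage_cost z w (n + m) =
  stage_cost z w n + stage_cost (traj z w n) (fun k => w (n + k)%N) m.
Proof.
rewrite /stage_cost big_split_ord; congr (_ + _).
by apply: eq_bigr => i _; rewrite pred_trajD.
Qed.

Lemma ell_transmit (z : state) uc : ell Q Rm z (uc, true) = qf Q (xp_of z) + qf Rm uc.
Proof. by rewrite /ell /= mul1r subrr mul0r addr0. Qed.

Lemma ell_hold (z : state) uc :
  ell Q Rm z (uc, false) = qf Q (xp_of z) + qf Rm (us_of z).
Proof. by rewrite /ell /= mul0r addr0 subr0 mul1r. Qed.

Hypotheses (posQ : posdefmx Q) (posRm : posdefmx Rm).

Lemma qf_xp_le_ell (z : state) v : qf Q (xp_of z) <= ell Q Rm z v.
Proof. by case: v => uc []; rewrite ?ell_transmit ?ell_hold lerDl qf_ge0. Qed.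

Lemma qf_us_le_ell (z : state) v : qf Rm (us_of (fsys fp g c b z v)) <= ell Q Rm z v.
Proof.
case: v => uc []; rewrite ?fsys_transmit ?fsys_hold ?ell_transmit ?ell_hold.
all: by rewrite lerDr qf_ge0.
Qed.

Lemma ell_ge0 (z : state) v : 0 <= ell Q Rm z v.
Proof. exact: le_trans (qf_ge0 posQ _) (qf_xp_le_ell z v). Qed.

Lemma stage_cost_ge0 (z : state) w n : 0 <= stage_cost z w n.
Proof. by apply: sumr_ge0 => i _; apply: ell_ge0. Qed.

Lemma pred_traj_transmit_once (xp : 'cV[R]_np) us (be : int) uc i :
  traj (xp, us, be) (fun k => (uc, k == 0%N)) i.+1 =
  (fiter fp i.+1 xp uc, uc, Order.min (be + (i.+1 * g)%:Z - c%:Z) b%:Z).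
Proof.
elim: i => [|i IH]; first by rewrite /= fsys_transmit mul1n; congr (_, _, _); lia.
rewrite -[traj _ _ i.+2]/(fsys fp g c b (traj _ _ i.+1) (uc, false)).
rewrite IH fsys_hold /= mulSn; congr (_, _, _).
by move: (i.+1 * g)%N => t; lia.
Qed.

(** * Terminal ingredients *)

Variables (Xfp : set 'cV[R]_np) (kp : 'cV[R]_np -> 'cV[R]_mp).
Variables (Vfp : 'cV[R]_np -> R) (sigma : R) (q : nat).
Hypotheses (fp0 : fp 0 0 = 0) (Xp0 : Xp 0) (Up0 : Up 0).
(* [c < q * g] is what (A3) gives for [q = ceil_div c g], see [ltn_ceil_div_mul]. *)
Hypotheses (le_gc : (g <= c)%N) (le_cb : (c <= b)%N) (lt_c_qg : (c < q * g)%N).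
Hypotheses (Xfp_sub : Xfp `<=` Xp) (Xfp0 : Xfp 0) (kpU : forall xp, Xfp xp -> Up (kp xp)).
Hypothesis kp_invariant : forall xp, Xfp xp ->
  (forall i, (1 <= i)%N -> (i <= q.-1)%N -> Xp (fiter fp i xp (kp xp)))
  /\ Xfp (fiter fp q xp (kp xp)).
Hypotheses (sigma_gt0 : 0 < sigma) (Vfp0 : Vfp 0 = 0).
Hypothesis Vfp_gt0 : forall xp, Xfp xp -> xp != 0 -> 0 < Vfp xp.
Hypothesis Vfp_decrease : forall xp, Xfp xp ->
  Vfp (fiter fp q xp (kp xp)) - Vfp xp <=
    - (q%:R * qf Rm (kp xp)) - \sum_(i < q) qf Q (fiter fp i xp (kp xp)).

Local Notation inXf := (inXf Xfp Up g c b).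
Local Notation Vf := (Vf Vfp sigma b).

Definition token_penalty (be : int) : R := sigma * ((b%:R : R) ^+ 2 - (be%:~R) ^+ 2).

Definition token_decrease (be : int) : R := if (be < b%:Z)%R then sigma else 0.

Lemma token_decrease_ge0 be : 0 <= token_decrease be.
Proof. by rewrite /token_decrease; case: ifP => // _; apply: ltW. Qed.

Lemma token_penalty_ge0 (be : int) : (0 <= be)%R -> (be <= b%:Z)%R ->
  0 <= token_penalty be.
Proof.
move=> be_ge0 be_le; rewrite /token_penalty pmulr_rge0 // subr_ge0.
by rewrite lerXn2r ?nnegrE ?ler0z // [b%:R](_ : _ = (b%:Z)%:~R) ?ler_int.
Qed.

Lemma token_penalty_refill (be t : int) : (0 <= be)%R -> (be <= b%:Z)%R -> (1 <= t)%R ->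
  token_penalty (Order.min (be + t) b%:Z) + token_decrease be <= token_penalty be.
Proof.
move=> be_ge0 be_le t_ge1; rewrite /token_decrease /token_penalty.
case: ltrP => [lt_be_b|le_b_be]; last first.
  have -> : Order.min (be + t) b%:Z = be by lia.
  by rewrite addr0.
have : (be + 1 <= Order.min (be + t) b%:Z)%R by lia.
move: (Order.min _ _) => m; rewrite -(ler_int R) intrD => le_m.
have : (be%:~R : R) ^+ 2 + 1 <= (m%:~R) ^+ 2 by move: be_ge0; rewrite -(ler0z R); nra.
by move=> le_sq; rewrite -[X in _ + X]mulr1 -mulrDr ler_pM2l //; lra.
Qed.

Lemma Vf_ge0 (z : state) : inXf z -> 0 <= Vf z.
Proof.
case: z => [[xp us] be]; rewrite /inXf /Vf /xp_of /us_of /beta_of /=.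
case=> [[-> [_ [be_ge0 be_le]]] | [Xfp_xp [_ [be_ge be_le]]]].
  by rewrite Vfp0 add0r; apply: token_penalty_ge0; lia.
apply: addr_ge0; last by apply: token_penalty_ge0; lia.
by have [->|/(Vfp_gt0 Xfp_xp)/ltW] := eqVneq xp 0; rewrite ?Vfp0.
Qed.

Lemma pred_traj_idle (be : int) i : (be <= b%:Z)%R ->
  traj (0, 0, be) (fun=> (0, false)) i = (0, 0, Order.min (be + (i * g)%:Z) b%:Z).
Proof.
move=> be_le; elim: i => [|i IH]; first by rewrite mul0n; congr (_, _, _); lia.
rewrite /= IH fsys_hold /= fp0 mulSn; congr (_, _, _).
by move: (i * g)%N => t; lia.
Qed.

Lemma VfE xp (us : 'cV[R]_mp) (be : int) : Vf (xp, us, be) = Vfp xp + token_penalty be.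
Proof. by []. Qed.

Definition terminal_descent (z : state) (w : nat -> input) (n : nat) : Prop :=
  [/\ admissible_on z w n, inXf (traj z w n) &
      stage_cost z w n + Vf (traj z w n) + token_decrease (beta_of z) <= Vf z].

Lemma terminal_descent_splice (z : state) (w w' : nat -> input) n m :
  terminal_descent z w n -> terminal_descent (traj z w n) w' m ->
  terminal_descent z (splice n w w') (n + m).
Proof.
move=> [adm_w Xf_w dec_w] [adm_w' Xf_w' dec_w']; split.
- exact: admissible_on_splice.
- by rewrite pred_traj_spliceD.
- rewrite stage_cost_splice pred_traj_spliceD.
  by have := token_decrease_ge0 (beta_of (traj z w n)); lra.
Qed.

Lemma q_gt0 : (0 < q)%N.
Proof. by move: lt_c_qg; case: q. Qed.

Lemma terminal_descent_idle (be : int) : (0 <= be)%R -> (be <= c%:Z - g%:Z - 1)%R ->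
  terminal_descent (0, 0, be) (fun=> (0, false)) q.
Proof.
move=> be_ge0 be_le; have be_le_b : (be <= b%:Z)%R by lia.
move: lt_c_qg (pred_traj_idle q be_le_b); set qg := (q * g)%N => lt_c_qg' traj_q.
split.
- move=> i _; rewrite pred_traj_idle // /inX /inU /xp_of /us_of /beta_of /=.
  by do !split => //; lia.
- rewrite traj_q /inXf /xp_of /us_of /beta_of /=.
  have [le_c|gt_c] := lerP (Order.min (be + qg%:Z) b%:Z) (c%:Z - g%:Z - 1).
    by left; do !split => //; lia.
  by right; do !split => //; lia.
- rewrite /stage_cost big1 => [|i _]; last first.
    by rewrite pred_traj_idle // ell_hold /= !qf0 addr0.
  rewrite add0r traj_q !VfE /= -addrA lerD2l.
  by apply: token_penalty_refill; lia.
Qed.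

Lemma terminal_descent_transmit xp (us : 'cV[R]_mp) (be : int) : Xfp xp -> Up us ->
  (c%:Z - g%:Z <= be)%R -> (be <= b%:Z)%R ->
  terminal_descent (xp, us, be) (fun k => (kp xp, k == 0%N)) q.
Proof.
move=> Xfp_xp Up_us be_ge be_le; have [Xp_iter Xfp_iter] := kp_invariant Xfp_xp.
have traj_q : traj (xp, us, be) (fun k => (kp xp, k == 0%N)) q =
    (fiter fp q xp (kp xp), kp xp, Order.min (be + ((q * g)%:Z - c%:Z)) b%:Z).
  by rewrite -(prednK q_gt0) pred_traj_transmit_once addrA.
split.
- case=> [|i] lt_iq.
    rewrite /inX /inU /xp_of /us_of /beta_of /=; do !split => //.
    + exact: Xfp_sub.
    + lia.
    + exact: kpU.
  have le_g_ig := leq_pmull g (ltn0Sn i).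
  rewrite pred_traj_transmit_once /inX /inU /xp_of /us_of /beta_of /=.
  do !split; try exact: kpU.
  + by apply: (Xp_iter i.+1); lia.
  + by move: (i.+1 * g)%N le_g_ig => t; lia.
  + lia.
- rewrite traj_q /inXf /xp_of /us_of /beta_of /=; right; do !split => //.
  + exact: kpU.
  + by move: (q * g)%N lt_c_qg => t; lia.
  + lia.
- have -> : stage_cost (xp, us, be) (fun k => (kp xp, k == 0%N)) q =
      \sum_(i < q) (qf Q (fiter fp i xp (kp xp)) + qf Rm (kp xp)).
    apply: eq_bigr => -[[|i] lt_iq] _; first by rewrite ell_transmit.
    by rewrite pred_traj_transmit_once ell_hold.
  rewrite big_split sumr_const card_ord -mulr_natl traj_q !VfE /=.
  have := Vfp_decrease Xfp_xp.
  have : (0 <= be)%R /\ (1 <= (q * g)%:Z - c%:Z)%R by split; lia.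
  by case=> /token_penalty_refill /(_ be_le) refill /refill; lra.
Qed.

Lemma terminal_descent_exists (z : state) : inXf z -> exists w, terminal_descent z w q.
Proof.
case: z => [[xp us] be]; rewrite /inXf /xp_of /us_of /beta_of /=.
case=> [[-> [-> [be_ge0 be_le]]] | [Xfp_xp [Up_us [be_ge be_le]]]].
  by eexists; apply: terminal_descent_idle.
by eexists; apply: terminal_descent_transmit.
Qed.

Lemma terminal_descent_blocks n (z : state) :
  inXf z -> exists w, terminal_descent z w (n.+1 * q).
Proof.
elim: n z => [|n IH] z Xf_z; first by rewrite mul1n; apply: terminal_descent_exists.
have [w desc_w] := terminal_descent_exists Xf_z.
have [_ Xf_next _] := desc_w; have [w' desc_w'] := IH _ Xf_next.
by exists (splice q w w'); rewrite mulSn; apply: terminal_descent_splice.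
Qed.

Lemma P_costE N (z : state) (w : nat -> input) :
  P_cost fp Q Rm Vfp sigma g c b N z w = stage_cost z w N + Vf (traj z w N).
Proof. by []. Qed.

Lemma P_admissible_beta_bounds N (z : state) (w : nat -> input) i :
  P_admissible fp Xp Up Xfp g c b N z w -> (i <= N)%N ->
  (0 <= beta_of (traj z w i))%R /\ (beta_of (traj z w i) <= b%:Z)%R.
Proof.
move=> [adm Xf_end]; rewrite leq_eqVlt => /predU1P [->|/adm [[_ [_ bounds]] _]] //.
by case: Xf_end => [[_ [_ [? ?]]] | [_ [_ [? ?]]]]; split; lia.
Qed.

Lemma shifted_candidate r N (x0 : state) (w : nat -> input) :
  (0 < r)%N -> (r * q <= N)%N -> P_admissible fp Xp Up Xfp g c b N x0 w ->
  exists2 v, P_admissible fp Xp Up Xfp g c b N (traj x0 w (r * q)) v &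
    P_cost fp Q Rm Vfp sigma g c b N (traj x0 w (r * q)) v + stage_cost x0 w (r * q)
    + token_decrease (beta_of (traj x0 w N)) <= P_cost fp Q Rm Vfp sigma g c b N x0 w.
Proof.
move=> r_gt0 le_MN [adm_w Xf_end].
(* The candidate is the tail of [w] after [M] steps followed by [r] terminal blocks. *)
have [W] := terminal_descent_blocks r.-1 Xf_end; rewrite prednK //.
rewrite !P_costE; move: adm_w; rewrite -(subnKC le_MN).
set M := (r * q)%N; move: (N - M)%N => K adm_w.
set x1 := traj x0 w M; set w' := fun k => w (M + k)%N.
have end_eq : traj x1 w' K = traj x0 w (M + K) by rewrite pred_trajD.
rewrite -end_eq => -[adm_W Xf_W dec_W]; exists (splice K w' W).
- split; rewrite addnC ?pred_traj_spliceD //.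
  by apply: admissible_on_splice => //; apply: admissible_on_drop.
- rewrite P_costE (addnC M K) stage_cost_splice pred_traj_spliceD (addnC K M).
  by rewrite stage_costD -/x1 -/w'; lra.
Qed.

(** * The rollout closed loop *)

Variables (r N : nat) (x : nat -> state) (u : nat -> input).
Local Notation M := (r * q)%N.
Hypotheses (r_gt0 : (0 < r)%N) (le_MN : (M <= N)%N).
Hypothesis dyn : forall k, x k.+1 = fsys fp g c b (x k) (u k).
Hypothesis rollout : forall j, P_feasible fp Xp Up Xfp g c b N (x (j * M)%N) ->
  exists ustar,
    P_optimal fp Xp Up Xfp Q Rm Vfp sigma g c b N (x (j * M)%N) ustar /\
    forall i, (i < M)%N -> u (j * M + i)%N = ustar i.
Hypothesis feasible0 : P_feasible fp Xp Up Xfp g c b N (x 0%N).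

Lemma closed_loop_pred_traj j (w : nat -> input) :
  (forall i, (i < M)%N -> u (j * M + i)%N = w i) ->
  forall i, (i <= M)%N -> x (j * M + i)%N = traj (x (j * M)%N) w i.
Proof.
move=> u_eq; elim=> [|i IH] le_iM; first by rewrite addn0.
by rewrite addnS dyn IH 1?ltnW // u_eq.
Qed.

Lemma closed_loop_next_sample j (w : nat -> input) :
  (forall i, (i < M)%N -> u (j * M + i)%N = w i) ->
  x (j.+1 * M)%N = traj (x (j * M)%N) w M.
Proof. by move=> u_eq; rewrite mulSn addnC (closed_loop_pred_traj u_eq). Qed.

Lemma rollout_feasible j : P_feasible fp Xp Up Xfp g c b N (x (j * M)%N).
Proof.
elim: j => [|j IH]; first by rewrite mul0n.
have [w [[adm_w _] u_eq]] := rollout IH.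
have [v adm_v _] := shifted_candidate r_gt0 le_MN adm_w.
by exists v; rewrite (closed_loop_next_sample u_eq).
Qed.

Section Optimizers.
Variable ustar : nat -> nat -> input.
Hypothesis ustar_opt : forall j,
  P_optimal fp Xp Up Xfp Q Rm Vfp sigma g c b N (x (j * M)%N) (ustar j) /\
  forall i, (i < M)%N -> u (j * M + i)%N = ustar j i.

Local Notation J j := (P_cost fp Q Rm Vfp sigma g c b N (x (j * M)%N) (ustar j)).
Local Notation beta_end j := (beta_of (traj (x (j * M)%N) (ustar j) N)).

Lemma value_descent j :
  J j.+1 + \sum_(i < M) ell Q Rm (x (j * M + i)%N) (u (j * M + i)%N)
  + token_decrease (beta_end j) <= J j.
Proof.
have [[adm_j _] u_eq] := ustar_opt j.
have [v adm_v dec_v] := shifted_candidate r_gt0 le_MN adm_j.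
have J_le := (ustar_opt j.+1).1.2 v; rewrite (closed_loop_next_sample u_eq) in J_le.
have -> : \sum_(i < M) ell Q Rm (x (j * M + i)%N) (u (j * M + i)%N) =
          stage_cost (x (j * M)%N) (ustar j) M.
  by apply: eq_bigr => i _; rewrite (closed_loop_pred_traj u_eq) 1?ltnW // u_eq.
by move: (J_le adm_v) dec_v; rewrite (closed_loop_next_sample u_eq); lra.
Qed.

Lemma value_ge0 j : 0 <= J j.
Proof.
have [[[_ Xf_end] _] _] := ustar_opt j.
by rewrite P_costE addr_ge0 ?stage_cost_ge0 ?Vf_ge0.
Qed.

Lemma closed_loop_series_le n :
  \sum_(0 <= j < n) (\sum_(i < M) ell Q Rm (x (j * M + i)%N) (u (j * M + i)%N)
                     + token_decrease (beta_end j)) <= J 0%N.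
Proof.
apply: (descent_series_le (J := fun j => J j)) => j; first exact: value_ge0.
by rewrite addrA; apply: value_descent.
Qed.

Lemma stage_cost_cvg0 : (fun k => ell Q Rm (x k) (u k)) @ \oo --> 0.
Proof.
apply: (@block_series_cvg0 _ _ M (J 0%N)) => [|k|n].
- by rewrite muln_gt0 r_gt0 q_gt0.
- exact: ell_ge0.
- apply: le_trans (closed_loop_series_le n); apply: ler_sum => j _.
  by rewrite lerDl token_decrease_ge0.
Qed.

Lemma token_decrease_cvg0 : (fun j => token_decrease (beta_end j)) @ \oo --> 0.
Proof.
apply: (@bounded_series_cvg0 _ _ (J 0%N)) => [j|n]; first exact: token_decrease_ge0.
apply: le_trans (closed_loop_series_le n); apply: ler_sum => j _.
by rewrite lerDr; apply: sumr_ge0 => i _; apply: ell_ge0.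
Qed.

Lemma terminal_bucket_full :
  exists j0, forall j, (j0 <= j)%N -> (b%:Z <= beta_end j)%R.
Proof.
move/cvgr0Pnorm_lt: token_decrease_cvg0 => /(_ sigma sigma_gt0) [j0 _ small].
exists j0 => j /small; rewrite /token_decrease.
by case: (ltrP (beta_end j) b%:Z) => // _; rewrite gtr0_norm ?ltxx.
Qed.

Lemma sampled_beta_bounds j i : (i <= N)%N -> (b%:Z <= beta_end j)%R ->
  [/\ (0 <= beta_of (traj (x (j * M)%N) (ustar j) i))%R,
      (beta_of (traj (x (j * M)%N) (ustar j) i) <= b%:Z)%R &
      (b%:Z - ((N - i) * g)%:Z <= beta_of (traj (x (j * M)%N) (ustar j) i))%R].
Proof.
move=> le_iN full; have [[adm _] _] := ustar_opt j.
have [be_ge0 be_le] := P_admissible_beta_bounds adm le_iN.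
have := beta_pred_traj_le (x (j * M)%N) (ustar j) i (N - i).
by rewrite subnKC //; move: full; move: ((N - i) * g)%N => t; split => //; lia.
Qed.

Lemma beta_cvg_interval :
  (fun k => dist_interval (Num.max 0 (b%:R - N%:R * g%:R)) b%:R
              ((beta_of (x k))%:~R)) @ \oo --> (0 : R).
Proof.
have [j0 full] := terminal_bucket_full.
have M_gt0 : (0 < M)%N by rewrite muln_gt0 r_gt0 q_gt0.
apply: cvg_near_cst; exists (j0 * M)%N => // k /= le_k.
have lt_iM : (k %% M < M)%N by rewrite ltn_pmod.
rewrite (divn_eq k M) (closed_loop_pred_traj (ustar_opt (k %/ M)).2 (ltnW lt_iM)).
have le_j0 : (j0 <= k %/ M)%N by rewrite leq_divRL.
have le_iN : (k %% M <= N)%N by apply/ltnW/(leq_trans lt_iM le_MN).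
have [be_ge0 be_le be_ge] := sampled_beta_bounds le_iN (full _ le_j0).
apply: dist_token_interval_eq0 => //; move: be_ge.
have : ((N - k %% M) * g <= N * g)%N by rewrite leq_mul2r leq_subr orbT.
by move: ((N - _) * g)%N (N * g)%N => s t; lia.
Qed.

Lemma beta_sampled_cvg_interval :
  (fun j => dist_interval (Num.max 0 (b%:R - (N - M)%:R * g%:R)) b%:R
              ((beta_of (x (j * M)%N))%:~R)) @ \oo --> (0 : R).
Proof.
have [j0 full] := terminal_bucket_full.
apply: cvg_near_cst; exists j0.+1 => // -[|j] //= lt_j0j.
rewrite (closed_loop_next_sample (ustar_opt j).2).
by have [] := sampled_beta_bounds le_MN (full _ lt_j0j); apply: dist_token_interval_eq0.
Qed.

End Optimizers.

Lemma rollout_stability :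
  (forall j, P_feasible fp Xp Up Xfp g c b N (x (j * M)%N))
  /\ (fun k => xp_of (x k)) @ \oo --> (0 : 'cV[R]_np)
  /\ (fun k => us_of (x k)) @ \oo --> (0 : 'cV[R]_mp)
  /\ (fun k => dist_interval (Num.max 0 (b%:R - N%:R * g%:R)) b%:R
                 ((beta_of (x k))%:~R)) @ \oo --> (0 : R)
  /\ (fun j => dist_interval (Num.max 0 (b%:R - (N - M)%:R * g%:R)) b%:R
                 ((beta_of (x (j * M)%N))%:~R)) @ \oo --> (0 : R).
Proof.
have [ustar ustar_opt] := choice (fun j => rollout (rollout_feasible j)).
have ell_cvg0 := stage_cost_cvg0 ustar_opt.
split; first exact: rollout_feasible.
split; first by apply: (qf_cvg0 posQ _ ell_cvg0) => k; apply: qf_xp_le_ell.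
split.
  rewrite -cvg_shiftS; apply: (qf_cvg0 posRm _ ell_cvg0) => k /=.
  by rewrite dyn; apply: qf_us_le_ell.
split; first exact: beta_cvg_interval ustar_opt.
exact: beta_sampled_cvg_interval ustar_opt.
Qed.

End TokenBucketSystem.

Theorem theorem1 (R : realType) (np mp : nat)
  (fp : 'cV[R]_np -> 'cV[R]_mp -> 'cV[R]_np)
  (Xp : set 'cV[R]_np) (Up : set 'cV[R]_mp)
  (Q : 'M[R]_np) (Rm : 'M[R]_mp) (g c b : nat)
  (Xfp : set 'cV[R]_np) (kp : 'cV[R]_np -> 'cV[R]_mp)
  (Vfp : 'cV[R]_np -> R) (sigma : R) (r N : nat)
  (x : nat -> state R np mp) (u : nat -> input R mp) :
  fp 0 0 = 0 ->
  closed Xp -> Xp 0 -> closed Up -> Up 0 ->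
  posdefmx Q -> posdefmx Rm ->
  (1 <= g)%N -> (g <= c)%N -> (c <= b)%N ->
  let q := ceil_div c g in
  (* (A1) *)
  closed Xfp -> Xfp `<=` Xp -> Xfp 0 ->
  (forall xp, Xfp xp -> Up (kp xp)) ->
  (forall xp, Xfp xp ->
     (forall i, (1 <= i)%N -> (i <= q.-1)%N -> Xp (fiter fp i xp (kp xp)))
     /\ Xfp (fiter fp q xp (kp xp))) ->
  (* (A2) *)
  {within Xfp, continuous Vfp} ->
  Vfp 0 = 0 -> (forall xp, Xfp xp -> xp != 0 -> 0 < Vfp xp) ->
  (forall xp, Xfp xp ->
     Vfp (fiter fp q xp (kp xp)) - Vfp xp <=
       - (q%:R * qf Rm (kp xp))
       - \sum_(i < q) qf Q (fiter fp i xp (kp xp))) ->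
  (* (A3) *)
  ~ (exists z : int, (c%:R / g%:R : R) = z%:~R) ->
  0 < sigma ->
  (1 <= r)%N ->
  let M := (r * q)%N in
  (M <= N)%N ->
  (* closed loop generated by the rollout scheme *)
  (forall k, x k.+1 = fsys fp g c b (x k) (u k)) ->
  (forall j, P_feasible fp Xp Up Xfp g c b N (x (j * M)%N) ->
     exists ustar,
       P_optimal fp Xp Up Xfp Q Rm Vfp sigma g c b N (x (j * M)%N) ustar /\
       forall i, (i < M)%N -> u (j * M + i)%N = ustar i) ->
  P_feasible fp Xp Up Xfp g c b N (x 0%N) ->
  (forall j, P_feasible fp Xp Up Xfp g c b N (x (j * M)%N))
  /\ (fun k => xp_of (x k)) @ \oo --> (0 : 'cV[R]_np)
  /\ (fun k => us_of (x k)) @ \oo --> (0 : 'cV[R]_mp)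
  /\ (fun k => dist_interval (Num.max 0 (b%:R - N%:R * g%:R)) b%:R
                 ((beta_of (x k))%:~R)) @ \oo --> (0 : R)
  /\ (fun j => dist_interval (Num.max 0 (b%:R - (N - M)%:R * g%:R)) b%:R
                 ((beta_of (x (j * M)%N))%:~R)) @ \oo --> (0 : R).
Proof.
move=> fp0 _ Xp0 _ Up0 posQ posRm g_gt0 le_gc le_cb q _ Xfp_sub Xfp0 kpU kp_invariant
  _ Vfp0 Vfp_gt0 Vfp_decrease ratio_notint sigma_gt0 r_gt0 M le_MN dyn rollout feasible0.
have lt_c_qg : (c < q * g)%N.
  exact/(ltn_ceil_div_mul g_gt0)/(ratio_notint_ndvdn g_gt0 ratio_notint).
exact: (rollout_stability posQ posRm fp0 Xp0 Up0 le_gc le_cb lt_c_qg Xfp_sub Xfp0 kpU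
  kp_invariant sigma_gt0 Vfp0 Vfp_gt0 Vfp_decrease r_gt0 le_MN dyn rollout feasible0).
Qed.
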